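(* Let $P$ be a term and $p,q$ interactions valid for $P$ such that $q$ is a permutation of $p$. Then $p\sim q$.
   Context: Fix a commutative semiring $\mathbb K$ and a countable set $\mathcal N$ of names. Polarities are $+,-$; $\neg$ exchanges them. An action is $u^\varepsilon(x)$ with $u,x\in\mathcal N$, $\varepsilon$ a polarity ($u$ is its subject; $x$ is bound in the continuation). Terms: $P,Q::=k\mid \alpha.P\mid \diamond P\mid P|Q\mid P\parallel Q\mid \nu x\,P$ with $k\in\mathbb K$. Terms are taken up to injective renaming of bound names and $\nu x\nu y P=\nu y\nu x P$, bound names being distinct from all other names. Positions are finite sequences of integers, $\iota.\kappa$ is concatenation, $\epsilon$ the empty position, ordered by the prefix order; two positions are independent if incomparable. Transition labels are visible labels $u^\varepsilon(x):\iota$ or internal labels $(\iota,\kappa)$; $\iota.a$ denotes $a$ with every position $\kappa$ replaced by $\iota.\kappa$. Transitions are generated by: $\alpha.P\xrightarrow{\alpha:\epsilon}\diamond P$; if $P\xrightarrow{a}P'$ then $\diamond P\xrightarrow{1.a}\diamond P'$, $P|Q\xrightarrow{1.a}P'|Q$, $Q|P\xrightarrow{2.a}Q|P'$, $P\parallel Q\xrightarrow{1.a}P'\parallel Q$, $Q\parallel P\xrightarrow{2.a}Q\parallel P'$, and $\nu x P\xrightarrow{a}\nu xP'$ if $x$ does not occur in $a$; if $P\xrightarrow{u^\varepsilon(x):\iota}P'$ and $Q\xrightarrow{u^{\neg\varepsilon}(y):\kappa}Q'$ then $P|Q\xrightarrow{(1.\iota,2.\kappa)}\nu x(P'|Q'[x/y])$.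 An interaction is a finite sequence of transition labels; it is valid for (an interaction of) $P$ if there are consecutive transitions from $P$ with these labels. Two labels are independent if every position occurring in one is independent of every position occurring in the other. Homotopy $\sim$ is the smallest congruence (for concatenation) on sequences of labels such that $ab\sim ba$ whenever $a,b$ are independent. *)

From mathcomp Require Import all_boot all_algebra.
From Stdlib Require Export Sorting.Permutation.

Set Implicit Arguments.
Unset Strict Implicit.
Unset Printing Implicit Defensive.

Definition name := nat.

Inductive polarity := Pos | Neg.
Definition neg (e : polarity) := match e with Pos => Neg | Neg => Pos end.

(* Terms over the semiring K.  [Act u e x P] is u^e(x).P, x bound in P;
   [Dia P] is the diamond, [Par] is |, [Dpar] is ||, [Nu x P] binds x. *)
Inductive term (K : Type) :=
| Const of K
| Act of name & polarity & name & term K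
| Dia of term K
| Par of term K & term K
| Dpar of term K & term K
| Nu of name & term K.

Arguments Const {K}.

Definition position := seq nat.
Definition indep_pos (i k : position) := ~~ prefix i k && ~~ prefix k i.

(* Labels: visible u^e(x):i, or internal (i,k). *)
Inductive label :=
| Vis of name & polarity & name & position
| Int of position & position.

Definition lpositions (a : label) : seq position :=
  match a with Vis _ _ _ i => [:: i] | Int i k => [:: i; k] end.

Definition lnames (a : label) : seq name :=
  match a with Vis u _ x _ => [:: u; x] | Int _ _ => [::] end.

Definition lshift (i : position) (a : label) : label :=
  match a with
  | Vis u e x k => Vis u e x (i ++ k)
  | Int k l => Int (i ++ k) (i ++ l)
  end.

Definition lbound (a : label) : option name :=
  match a with Vis _ _ x _ => Some x | Int _ _ => None end.

Section Syntax.
Variable K : Type.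

Fixpoint fn (P : term K) : seq name :=
  match P with
  | Const _ => [::]
  | Act u _ x P => u :: [seq n <- fn P | n != x]
  | Dia P => fn P
  | Par P Q | Dpar P Q => fn P ++ fn Q
  | Nu x P => [seq n <- fn P | n != x]
  end.

Fixpoint bn (P : term K) : seq name :=
  match P with
  | Const _ => [::]
  | Act _ _ x P => x :: bn P
  | Dia P => bn P
  | Par P Q | Dpar P Q => bn P ++ bn Q
  | Nu x P => x :: bn P
  end.

Definition names (P : term K) : seq name := fn P ++ bn P.

(* subst x y P = P[x/y]: replace the free occurrences of y by x
   (capture-avoiding whenever x is not a bound name of P, which is
   required wherever it is used). *)
Definition ren (x y n : name) : name := if n == y then x else n.

Fixpoint subst (x y : name) (P : term K) : term K :=
  match P with
  | Const k => Const k
  | Act u e z P => Act (ren x y u) e z (if z == y then P else subst x y P)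
  | Dia P => Dia (subst x y P)
  | Par P Q => Par (subst x y P) (subst x y Q)
  | Dpar P Q => Dpar (subst x y P) (subst x y Q)
  | Nu z P => Nu z (if z == y then P else subst x y P)
  end.

Inductive sc : term K -> term K -> Prop :=
| sc_refl P : sc P P
| sc_sym P Q : sc P Q -> sc Q P
| sc_trans P Q R : sc P Q -> sc Q R -> sc P R
| sc_alpha_act u e x z P : z \notin names P ->
    sc (Act u e x P) (Act u e z (subst z x P))
| sc_alpha_nu x z P : z \notin names P ->
    sc (Nu x P) (Nu z (subst z x P))
| sc_nu_swap x y P : sc (Nu x (Nu y P)) (Nu y (Nu x P))
| sc_act u e x P P' : sc P P' -> sc (Act u e x P) (Act u e x P')
| sc_dia P P' : sc P P' -> sc (Dia P) (Dia P')
| sc_par P P' Q Q' : sc P P' -> sc Q Q' -> sc (Par P Q) (Par P' Q')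
| sc_dpar P P' Q Q' : sc P P' -> sc Q Q' -> sc (Dpar P Q) (Dpar P' Q')
| sc_nu x P P' : sc P P' -> sc (Nu x P) (Nu x P').

(* freshness of the bound name of a label w.r.t. a term (Barendregt
   convention: the bound name of a label is distinct from other names) *)
Definition lfresh (a : label) (Q : term K) : Prop :=
  match lbound a with Some x => x \notin fn Q | None => True end.

(* Transition rules on representatives, the Barendregt convention being
   made explicit through freshness side conditions. *)
Inductive rstep : term K -> label -> term K -> Prop :=
| rs_act u e x P : x != u ->
    rstep (Act u e x P) (Vis u e x [::]) (Dia P)
| rs_dia P a P' : rstep P a P' ->
    rstep (Dia P) (lshift [:: 1] a) (Dia P')
| rs_parl P Q a P' : rstep P a P' -> lfresh a Q ->
    rstep (Par P Q) (lshift [:: 1] a) (Par P' Q)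
| rs_parr P Q a Q' : rstep Q a Q' -> lfresh a P ->
    rstep (Par P Q) (lshift [:: 2] a) (Par P Q')
| rs_dparl P Q a P' : rstep P a P' -> lfresh a Q ->
    rstep (Dpar P Q) (lshift [:: 1] a) (Dpar P' Q)
| rs_dparr P Q a Q' : rstep Q a Q' -> lfresh a P ->
    rstep (Dpar P Q) (lshift [:: 2] a) (Dpar P Q')
| rs_nu x P a P' : rstep P a P' -> x \notin lnames a ->
    rstep (Nu x P) a (Nu x P')
| rs_sync P Q P' Q' u e x y i k :
    rstep P (Vis u e x i) P' -> rstep Q (Vis u (neg e) y k) Q' ->
    x \notin fn Q -> x \notin bn Q' ->
    rstep (Par P Q) (Int (1 :: i) (2 :: k)) (Nu x (Par P' (subst x y Q'))).

Definition step (P : term K) (a : label) (P' : term K) : Prop :=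
  exists P0 P1, sc P P0 /\ rstep P0 a P1 /\ sc P1 P'.

Inductive valid : term K -> seq label -> Prop :=
| valid_nil P : valid P [::]
| valid_cons P a P' s : step P a P' -> valid P' s -> valid P (a :: s).

End Syntax.

Definition indep (a b : label) : Prop :=
  forall i k, i \in lpositions a -> k \in lpositions b -> indep_pos i k.

Inductive homotopic : seq label -> seq label -> Prop :=
| ho_refl s : homotopic s s
| ho_sym s t : homotopic s t -> homotopic t s
| ho_trans s t r : homotopic s t -> homotopic t r -> homotopic s r
| ho_swap s t a b : indep a b -> homotopic (s ++ a :: b :: t) (s ++ b :: a :: t).

From Pilot Require Import Defs.
From mathcomp Require Import all_boot all_algebra.

Set Implicit Arguments.
Unset Strict Implicit.
Unset Printing Implicit Defensive.

(* A transition fires at positions of action prefixes of the source term, and the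
   action prefixes of the target are never prefixes of the fired positions.  Hence
   along a valid interaction no later label lies at a prefix of an earlier one.  If
   p and q are two such orderings of the same labels, the head a of p can be moved
   to the front of q: every b crossed precedes a in q and follows it in p, so
   neither of a, b lies at a prefix of the other, i.e. they are independent. *)

Section ActPositions.
Variable K : Type.

Fixpoint act_positions (P : term K) : seq position :=
  match P with
  | Const _ => [::]
  | Act _ _ _ P => [::] :: map (cons 1) (act_positions P)
  | Dia P => map (cons 1) (act_positions P)
  | Par P Q | Dpar P Q => map (cons 1) (act_positions P) ++ map (cons 2) (act_positions Q)
  | Nu _ P => act_positions P
  end.

Lemma act_positions_subst x y (P : term K) : act_positions (subst x y P) = act_positions P.
Proof.
elim: P => //= [u e z P IH|P IH|P IHP Q IHQ|P IHP Q IHQ|z P IH];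
  by [case: (z == y); rewrite ?IH | rewrite ?IH ?IHP ?IHQ].
Qed.

Lemma act_positions_sc (P Q : term K) : sc P Q -> act_positions P = act_positions Q.
Proof. by elim=> //= *; rewrite ?act_positions_subst; congruence. Qed.

(* Qualified because fintype's [lshift] on ordinals shadows it. *)
Lemma lpositions_lshift s a : lpositions (Defs.lshift s a) = map (cat s) (lpositions a).
Proof. by case: a. Qed.

Lemma mem_map_cons (n : nat) j (A : seq position) : (n :: j \in map (cons n) A) = (j \in A).
Proof. by apply: mem_map => ? ? []. Qed.

Lemma rstep_lpositions P a P' : rstep P a P' -> {subset lpositions a <= act_positions P}.
Proof.
elim=> {P a P'} /=.
- by move=> u e x P _ i; rewrite !inE => ->.
- by move=> P a P' _ sub; rewrite lpositions_lshift; apply: sub_map.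
- 1,3: by move=> P Q a P' _ sub _ i; rewrite lpositions_lshift mem_cat => /(sub_map sub) ->.
- 1,2: by move=> P Q a Q' _ sub _ i; rewrite lpositions_lshift mem_cat => /(sub_map sub) ->;
         rewrite orbT.
- by [].
- move=> P Q P' Q' u e x y i k _ subP _ subQ _ _ j.
  by rewrite !inE mem_cat => /orP[]/eqP->; rewrite mem_map_cons ?subP ?subQ ?orbT ?inE.
Qed.

Lemma rstep_act_positions P a P' : rstep P a P' ->
  {subset act_positions P' <= act_positions P}.
Proof.
elim=> {P a P'} /=.
- by move=> u e x P _ j Pj; rewrite inE Pj orbT.
- by move=> P a P' _ sub; apply: sub_map.
- 1,3: by move=> P Q a P' _ sub _ j; rewrite !mem_cat => /orP[/(sub_map sub)|] ->;
         rewrite ?orbT.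
- 1,2: by move=> P Q a Q' _ sub _ j; rewrite !mem_cat => /orP[|/(sub_map sub)] ->;
         rewrite ?orbT.
- by [].
- move=> P Q P' Q' u e x y i k _ subP _ subQ _ _ j.
  by rewrite act_positions_subst !mem_cat => /orP[/(sub_map subP)|/(sub_map subQ)] ->;
    rewrite ?orbT.
Qed.

Lemma rstep_not_prefix P a P' : rstep P a P' ->
  forall j i, j \in act_positions P' -> i \in lpositions a -> ~~ prefix j i.
Proof.
elim=> {P a P'} /=.
- by move=> u e x P _ j i /mapP[j' _ ->]; rewrite inE => /eqP->.
- move=> P a P' _ IH j i /mapP[j' P'j ->].
  by rewrite lpositions_lshift => /mapP[i' ai ->] /=; apply: IH.
- 1,2,3,4: move=> P Q a R _ IH _ j i; rewrite mem_cat lpositions_lshift;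
    by move=> /orP[]/mapP[j' Rj ->] /mapP[i' ai ->] //=; apply: IH.
- by [].
- move=> P Q P' Q' u e x y i k _ IHP _ IHQ _ _ j l.
  rewrite act_positions_subst mem_cat !inE.
  by move=> /orP[]/mapP[j' Rj ->] /orP[]/eqP-> //=; [apply: IHP Rj _|apply: IHQ Rj _];
    rewrite inE.
Qed.

Definition label_within (A : seq position) (b : label) : bool :=
  all (fun i => i \in A) (lpositions b).

Lemma valid_label_within P s : valid P s -> all (label_within (act_positions P)) s.
Proof.
elim=> {P s} // P a P' s [P0 [P1 [PP0 [st P1P']]]] _ IH /=.
rewrite (act_positions_sc PP0); apply/andP; split.
  exact/allP/(rstep_lpositions st).
apply: sub_all IH => b; apply: sub_all => j.
by rewrite -(act_positions_sc P1P'); apply: rstep_act_positions st j.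
Qed.

End ActPositions.

Definition lprefix (a b : label) : bool :=
  has (fun i => has (prefix i) (lpositions b)) (lpositions a).

Definition causal (s : seq label) : bool := pairwise (fun a b => ~~ lprefix b a) s.

Lemma lprefix_refl a : lprefix a a.
Proof. by case: a => * /=; rewrite /lprefix /= prefix_refl. Qed.

Lemma indep_lprefix a b : ~~ lprefix a b -> ~~ lprefix b a -> indep a b.
Proof.
move=> /hasPn ab /hasPn ba i k ai bk.
by rewrite /indep_pos (hasPn (ab i ai) k bk) (hasPn (ba k bk) i ai).
Qed.

Lemma valid_causal (K : Type) (P : term K) s : valid P s -> causal s.
Proof.
elim=> {P s} // P a P' s [P0 [P1 [_ [st P1P']]]] V IH.
rewrite /causal pairwise_cons; apply/andP; split=> //.
have := valid_label_within V; rewrite -(act_positions_sc P1P').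
apply: sub_all => b /allP bP'; apply/hasPn => j /bP' P'j.
by apply/hasPn => i; apply: rstep_not_prefix st j i P'j.
Qed.

Lemma all_In (T : Type) (p : pred T) s x : all p s -> List.In x s -> p x.
Proof. by elim: s => //= y s IH /andP[py ps] [<-|/(IH ps)]. Qed.

Lemma homotopic_catl r s t : homotopic s t -> homotopic (r ++ s) (r ++ t).
Proof.
elim=> {s t} [s|s t _ ts|s t u _ st _ tu|s t a b ab].
- exact: ho_refl.
- exact: ho_sym.
- exact: ho_trans tu.
- by rewrite !catA; apply: ho_swap.
Qed.

Lemma homotopic_move a s t : (forall b, List.In b s -> indep b a) ->
  homotopic (s ++ a :: t) (a :: s ++ t).
Proof.
elim: s => [|b s IH] sa /=; first exact: ho_refl.
have ba : indep b a by apply: sa; left.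
have /(homotopic_catl [:: b]) sat : homotopic (s ++ a :: t) (a :: s ++ t).
  by apply: IH => c sc; apply: sa; right.
exact: ho_trans sat (ho_swap [::] _ ba).
Qed.

Lemma causal_perm_homotopic p q : causal p -> causal q -> Permutation p q -> homotopic p q.
Proof.
elim: p q => [|a p IH] q cp cq pq; first by rewrite (Permutation_nil pq); apply: ho_refl.
have [q1 [q2 Eq]] := List.in_split a q (Permutation_in a pq (or_introl erefl)); subst q.
move: cp cq; rewrite /causal pairwise_cons pairwise_cat allrel_consr /=.
move=> /andP[ap cp] /and4P[/andP[q1a q12] cq1 _ cq2].
have q1_indep_a b : List.In b q1 -> indep b a.
  move=> q1b; apply: indep_lprefix; last exact: all_In q1a q1b.
  have [ab|pb] := Permutation_in b (Permutation_sym pq) (List.in_or_app _ _ _ (or_introl q1b)).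
    by move: (all_In q1a q1b); rewrite -ab lprefix_refl.
  exact: all_In ap pb.
apply: ho_trans (ho_sym (homotopic_move q2 q1_indep_a)).
have cq12 : causal (q1 ++ q2) by rewrite /causal pairwise_cat q12 cq1 cq2.
have pq12 : homotopic p (q1 ++ q2) by apply: IH cp cq12 (Permutation_cons_app_inv _ _ pq).
exact (homotopic_catl [:: a] pq12).
Qed.

Theorem proposition2p7 (K : comPzSemiRingType) (P : term K) (p q : seq label) :
  valid P p -> valid P q -> Permutation p q -> homotopic p q.
Proof.
by move=> Vp Vq; apply: causal_perm_homotopic; [exact: valid_causal Vp|exact: valid_causal Vq].
Qed.
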